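(* Let $s\ge 1$, $q=4^{2s}$, and let $\theta$ be the automorphism of $F_q$ given by $\theta(a)=a^{4^s}$. Let $n$ be odd and let $C$ be a skew cyclic code of length $n$ over $F_q$ generated by a (right) divisor of $x^n-1$ in $F_q[x;\theta]$. If $C$ is a reversible DNA code, then its dual code $C^\perp$ is also a reversible DNA code.
   Context: $F_q[x;\theta]$ is the skew polynomial ring with multiplication determined by $xa=\theta(a)x$. A skew cyclic code of length $n$ is a linear code $C\subseteq F_q^n$ such that $(\theta(c_{n-1}),\theta(c_0),\ldots,\theta(c_{n-2}))\in C$ whenever $(c_0,\ldots,c_{n-1})\in C$; such codes correspond to left $F_q[x;\theta]$-submodules of $F_q[x;\theta]/(x^n-1)$ via $(c_0,\ldots,c_{n-1})\mapsto\sum c_ix^i$. $C^\perp$ is the dual with respect to the standard inner product on $F_q^n$. DNA correspondence: there is a fixed bijection $\tau:F_{4^{2s}}\to\{A,T,G,C\}^{2s}$ such that for every $\beta$, $\tau(\beta^{4^s})$ is the reverse of the string $\tau(\beta)$; it extends to $\phi:F_q^n\to\{A,T,G,C\}^{2sn}$ by concatenation. A code $C\subseteq F_q^n$ is a reversible DNA code if the reverse string $\phi(c)^r$ lies in $\phi(C)$ for all $c\in C$; equivalently, $(\theta(c_{n-1}),\ldots,\theta(c_1),\theta(c_0))\in C$ for every $(c_0,\ldots,c_{n-1})\in C$. *)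

From HB Require Import structures.
From mathcomp Require Import all_boot all_order all_algebra.
Set Implicit Arguments. Unset Strict Implicit. Unset Printing Implicit Defensive.
Import GRing.Theory.
Local Open Scope ring_scope.

(* Skew polynomials over F with respect to an endomorphism theta are
   represented by their coefficient sequences, i.e. by {poly F} (additive
   structure), with the skew product determined by x a = theta(a) x:
   (sum_i p_i x^i)(sum_j q_j x^j) = sum_{i,j} p_i theta^i(q_j) x^{i+j}. *)
Definition skmul (F : fieldType) (theta : F -> F) (p q : {poly F}) : {poly F} :=
  \poly_(k < (size p + size q).-1)
     \sum_(i < k.+1) p`_i * iter i theta (q`_(k - i)).

Definition theta_s (F : fieldType) (s : nat) (a : F) : F := a ^+ (4 ^ s).

Definition code (F : fieldType) (n : nat) := 'rV[F]_n -> Prop.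

Definition linear_code (F : fieldType) n (C : code F n) : Prop :=
  C 0 /\ (forall (a : F) u v, C u -> C v -> C (a *: u + v)).

Definition vec_poly (F : fieldType) n (c : 'rV[F]_n) : {poly F} :=
  \sum_(i < n) c 0 i *: 'X^i.

(* entry of a word at a natural-number index (0 outside range) *)
Definition vget (F : fieldType) n (c : 'rV[F]_n) (k : nat) : F :=
  nth 0 [seq c 0 j | j <- enum 'I_n] k.

(* skew cyclic: (theta c_{n-1}, theta c_0, ..., theta c_{n-2}) in C *)
Definition skew_cyclic (F : fieldType) (theta : F -> F) n (C : code F n) : Prop :=
  linear_code C /\
  forall c, C c ->
    C (\row_(i < n) theta (vget c ((i + n.-1) %% n))).

(* The skew cyclic code generated by g: the left F[x;theta]-submodule of
   F[x;theta]/F[x;theta](x^n - 1) generated by the class of g, transported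
   to F^n via (c_0,...,c_{n-1}) |-> sum c_i x^i. *)
Definition gen_code (F : fieldType) (theta : F -> F) n (g : {poly F}) : code F n :=
  fun c => exists f k : {poly F},
    vec_poly c = skmul theta f g + skmul theta k ('X^n - 1).

Definition skew_rdivides (F : fieldType) (theta : F -> F) (g p : {poly F}) : Prop :=
  exists h, skmul theta h g = p.

Definition dual_code (F : fieldType) n (C : code F n) : code F n :=
  fun v => forall c, C c -> \sum_(i < n) v 0 i * c 0 i = 0.

Inductive nucleotide := nA | nT | nG | nC.

Definition phi (F : fieldType) (s n : nat) (tau : F -> (2 * s).-tuple nucleotide)
  (c : 'rV[F]_n) : seq nucleotide :=
  flatten [seq tval (tau (c 0 i)) | i <- enum 'I_n].

Definition DNA_corr (F : fieldType) (s : nat) (tau : F -> (2 * s).-tuple nucleotide) : Prop :=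
  bijective tau /\ forall b : F, tval (tau (b ^+ (4 ^ s))) = rev (tval (tau b)).

Definition reversible_DNA (F : fieldType) s n (tau : F -> (2 * s).-tuple nucleotide)
  (C : code F n) : Prop :=
  forall c, C c -> exists c', C c' /\ phi tau c' = rev (phi tau c).

Arguments gen_code {F} theta n g _.

From mathcomp Require Import all_boot all_algebra all_field.

Set Implicit Arguments.
Unset Strict Implicit.

Import GRing.Theory.
Local Open Scope ring_scope.

(* Reversing the DNA word of c is the same as encoding the twisted reversal
   (theta c_(n-1), ..., theta c_0), because tau(theta b) is the reverse of
   tau(b); hence a code is a reversible DNA code iff it is stable under
   twisted reversal.  As theta is an involutive field automorphism,
   <rev_theta v, c> = theta <v, rev_theta c>, so stability under twisted
   reversal passes from C to its dual. *)

Lemma rev_enum_ord n : rev (enum 'I_n) = map (@rev_ord n) (enum 'I_n).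
Proof.
apply: (inj_map val_inj); rewrite map_rev val_enum_ord -map_comp.
apply: (@eq_from_nth _ 0%N); first by rewrite size_rev size_iota size_map size_enum_ord.
rewrite size_rev size_iota => i lt_in.
rewrite nth_rev ?size_iota // (nth_map (Ordinal lt_in)) ?size_enum_ord //=.
by rewrite nth_enum_ord // nth_iota // (rev_ord_proof (Ordinal lt_in)).
Qed.

Section TwistedReversal.

Variables (F : fieldType) (theta : F -> F).

Definition twisted_rev n (v : 'rV[F]_n) : 'rV[F]_n :=
  \row_i theta (v 0 (rev_ord i)).

Hypotheses (thetaD : {morph theta : x y / x + y})
  (thetaM : {morph theta : x y / x * y}) (thetaK : involutive theta).

Lemma theta0 : theta 0 = 0.
Proof. by apply: (addrI (theta 0)); rewrite -thetaD !addr0. Qed.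

Lemma dot_twisted_rev n (v c : 'rV[F]_n) :
  \sum_(i < n) twisted_rev v 0 i * c 0 i
    = theta (\sum_(i < n) v 0 i * twisted_rev c 0 i).
Proof.
rewrite (big_morph theta thetaD theta0) (reindex_inj rev_ord_inj) /=.
by apply: eq_bigr => i _; rewrite !mxE rev_ordK thetaM thetaK.
Qed.

Lemma dual_code_twisted_rev n (C : code F n) :
  (forall c, C c -> C (twisted_rev c)) ->
  forall v, dual_code C v -> dual_code C (twisted_rev v).
Proof.
move=> C_rev v Cv_perp c Cc.
by rewrite dot_twisted_rev (Cv_perp _ (C_rev c Cc)) theta0.
Qed.

End TwistedReversal.

Section DNAReversal.

Variables (F : fieldType) (theta : F -> F) (s : nat).
Variable tau : F -> (2 * s).-tuple nucleotide.
Hypothesis tau_inj : injective tau.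
Hypothesis tau_theta : forall b, tval (tau (theta b)) = rev (tval (tau b)).

Lemma phi_inj n : injective (@phi F s n tau).
Proof.
move=> c1 c2; rewrite /phi => eq_phi.
have shape_phi (c : 'rV[F]_n) :
    shape [seq tval (tau (c 0 i)) | i <- enum 'I_n] = nseq n (2 * s)%N.
  rewrite /shape -map_comp (eq_map (fun i => size_tuple _)).
  by rewrite -[in RHS](size_enum_ord n); elim: (enum _) => //= ? ? ->.
have := flattenK [seq tval (tau (c1 0 i)) | i <- enum 'I_n].
rewrite eq_phi !shape_phi -(shape_phi c2) flattenK => /eq_in_map eq_tau.
apply/rowP => i; apply/tau_inj/val_inj/esym/eq_tau.
by rewrite mem_enum.
Qed.

Lemma phi_twisted_rev n (v : 'rV[F]_n) :
  phi tau (twisted_rev theta v) = rev (phi tau v).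
Proof.
rewrite /phi rev_flatten -map_comp -map_rev rev_enum_ord -map_comp.
by congr flatten; apply: eq_map => i /=; rewrite mxE tau_theta.
Qed.

Lemma reversible_DNA_twisted_rev n (C : code F n) :
  reversible_DNA tau C <-> (forall c, C c -> C (twisted_rev theta c)).
Proof.
split=> [C_rev c /C_rev [c' [Cc' phi_c']] | C_rev c Cc].
  suff -> : twisted_rev theta c = c' by [].
  by apply: phi_inj; rewrite phi_twisted_rev.
by exists (twisted_rev theta c); rewrite phi_twisted_rev; split; first exact: C_rev.
Qed.

End DNAReversal.

Section FrobeniusInvolution.

Variables (F : finFieldType) (s : nat).
Hypothesis cardF : #|F| = (4 ^ (2 * s))%N.

Lemma theta_sD : {morph theta_s s : x y / x + y : F}.
Proof.
have char2 : (2 \in [pchar F])%N.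
  by apply: (@card_finPcharP _ _ (4 * s)); rewrite // cardF -[4%N]/(2 ^ 2)%N -expnM mulnA.
move=> x y; apply: exprDn_pchar.
by rewrite (eq_pnat _ (pcharf_eq char2)) -[4%N]/(2 ^ 2)%N !pnatX pnat_id.
Qed.

Lemma theta_sM : {morph theta_s s : x y / x * y : F}.
Proof. by move=> x y; rewrite /theta_s exprMn. Qed.

Lemma theta_sK : involutive (theta_s s : F -> F).
Proof. by move=> x; rewrite /theta_s -exprM -expnD addnn -mul2n -cardF expf_card. Qed.

End FrobeniusInvolution.

Theorem theorem7 (s : nat) (F : finFieldType) (n : nat)
  (tau : F -> (2 * s).-tuple nucleotide) (g : {poly F}) :
  (1 <= s)%N ->
  #|F| = (4 ^ (2 * s))%N ->
  DNA_corr tau ->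
  odd n ->
  skew_rdivides (theta_s s) g ('X^n - 1) ->
  skew_cyclic (theta_s s) (gen_code (theta_s s) n g) ->
  reversible_DNA tau (gen_code (theta_s s) n g) ->
  reversible_DNA tau (dual_code (gen_code (theta_s s) n g)).
Proof.
move=> _ cardF [[tau_inv tauK _] tau_theta] _ _ _.
have rev_DNA C :=
  reversible_DNA_twisted_rev (theta := theta_s s) (can_inj tauK) tau_theta C.
move=> /rev_DNA C_rev; apply/rev_DNA.
exact: (dual_code_twisted_rev (theta_sD cardF) (@theta_sM F s) (theta_sK cardF) C_rev).
Qed.
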